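(* Let $(f_n)_{n\geqslant1}$ be a sequence of nondecreasing functions $f_n:[0,\infty)\to[0,\infty)$. Assume that there is an increasing sequence $(s_k)_{k\geqslant1}\subset[0,\infty)$ with $s_k\to\infty$ such that for each $k$ the sequence $(f_n(s_k))_{n\geqslant1}$ has a limit, denoted $f(s_k)$ (possibly $+\infty$), and let $\ell=\lim_{k\to\infty}f(s_k)$ (which exists since $(f(s_k))_k$ is nondecreasing). Then: (i) for any sequence $t_n\to\infty$, $\liminf_{n\to\infty}f_n(t_n)\geqslant\ell$; (ii) there exists a nondecreasing sequence $(t_n^* )_{n\geqslant1}$ with $t_n^*\to\infty$ such that $f_n(t_n^* )\to\ell$; (iii) if $(t_n^* )_{n\geqslant1}$ is as in (ii), then for any sequence $(t_n)_{n\geqslant1}$ with $0\leqslant t_n\leqslant t_n^*$ and $t_n\to\infty$, one has $f_n(t_n)\to\ell$. *)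

From HB Require Import structures.
From mathcomp Require Import all_boot all_order all_algebra.
From mathcomp Require Import all_classical all_reals all_analysis.
Set Implicit Arguments. Unset Strict Implicit. Unset Printing Implicit Defensive.
Import Order.TTheory GRing.Theory Num.Theory.
Import numFieldNormedType.Exports.

(** Part (i): once [t n >= s k], monotonicity gives [f n (t n) >= f n (s k)],
    so [liminf f n (t n) >= f(s k)] for every [k], hence [>= l]; part (iii)
    adds the bound [limsup f n (t n) <= limsup f n (t*_n) = l].  For part
    (ii), pick thresholds [N k] beyond which [f n (s k) <= f(s k) + 1/(k+1)]
    and set [t*_n = s (k n)], where [k n] is a nondecreasing unbounded index
    that grows slowly enough that [N (k n) <= n]; then
    [f n (t*_n) <= l + 1/(k n + 1)], so [limsup f n (t*_n) <= l]. *)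
From HB Require Import structures.
From mathcomp Require Import all_boot all_order all_algebra.
From mathcomp Require Import all_classical all_reals all_analysis.
Import Order.TTheory GRing.Theory Num.Theory.
Import numFieldNormedType.Exports.

Local Open Scope ring_scope.
Local Open Scope classical_set_scope.

Fixpoint diag_index (N : nat -> nat) (n : nat) : nat :=
  match n with
  | 0 => 0
  | m.+1 => let k := diag_index N m in if (N k.+1 <= m.+1)%N then k.+1 else k
  end.

Section DiagIndex.
Variable N : nat -> nat.

Lemma diag_index_nd : {homo diag_index N : m n / (m <= n)%N}.
Proof.
apply: (homo_leq (r := leq)) => // [|n]; first exact: leq_trans.
by rewrite /=; case: ifP.
Qed.

Lemma diag_index_le n : (N 0 <= n)%N -> (N (diag_index N n) <= n)%N.
Proof.
suff : diag_index N n = 0%N \/ (N (diag_index N n) <= n)%N.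
  by case=> [->|].
elim: n => [|n IH] /=; first by left.
case: ifP => [->|_]; first by right.
by case: IH => [->|le_n]; [left|right; rewrite ltnW].
Qed.

Lemma diag_index_unbounded K : \forall n \near \oo, (K <= diag_index N n)%N.
Proof.
suff [n0 K_le] : exists n0, (K <= diag_index N n0)%N.
  by exists n0 => // n /= /diag_index_nd; exact: leq_trans.
elim: K => [|K [n0 K_le]]; first by exists 0%N.
have [lt_K|ge_K] := ltnP K (diag_index N n0); first by exists n0.
have eK : diag_index N n0 = K by apply/eqP; rewrite eqn_leq ge_K K_le.
pose n1 := maxn n0 (N K.+1).
have K_le1 : (K <= diag_index N n1)%N by rewrite -eK diag_index_nd ?leq_maxl.
exists n1.+1; have [lt_K1|ge_K1] := ltnP K (diag_index N n1).
  by rewrite (leq_trans lt_K1) // diag_index_nd.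
have e1 : diag_index N n1 = K by apply/eqP; rewrite eqn_leq ge_K1 K_le1.
by rewrite /= e1 ifT // (leq_trans (leq_maxr n0 _)).
Qed.

End DiagIndex.

Section LimnEinfEsup.
Context {R : realType}.
Local Open Scope ereal_scope.
Implicit Types (u v : (\bar R)^nat) (l : \bar R).

Lemma le_limn_esup u v : (\forall n \near \oo, u n <= v n) ->
  limn_esup u <= limn_esup v.
Proof.
move=> [N _ uv]; rewrite !limn_esup_lim.
apply: lee_lim; [exact: is_cvg_esups|exact: is_cvg_esups|].
exists N => // n /= Nn; apply: ge_ereal_sup => _ [m /= nm <-].
apply: le_trans (uv m _) _; first by rewrite /= (leq_trans Nn nm).
by apply: ereal_sup_ubound; exists m.
Qed.

Lemma le_limn_einf u v : (\forall n \near \oo, u n <= v n) ->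
  limn_einf u <= limn_einf v.
Proof.
move=> uv; rewrite /limn_einf leeN2; apply: le_limn_esup.
by apply: filterS uv => n; rewrite leeN2.
Qed.

Lemma limn_esup_le_near u l : (\forall n \near \oo, u n <= l) ->
  limn_esup u <= l.
Proof.
by move/le_limn_esup; rewrite (cvg_limn_einf_sup (cvg_cst l)).2.
Qed.

Lemma limn_einf_esup_cvg u l : l <= limn_einf u -> limn_esup u <= l ->
  u @ \oo --> l.
Proof.
move=> le_inf le_sup.
have inf_l : limn_einf u = l.
  by apply/eqP; rewrite eq_le le_inf (le_trans (limn_einf_sup u) le_sup).
have sup_l : limn_esup u = l.
  by apply/eqP; rewrite eq_le le_sup (le_trans le_inf (limn_einf_sup u)).
have einfs_l : einfs u @ \oo --> l.
  by rewrite -inf_l limn_einf_lim; exact: is_cvg_einfs.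
have esups_l : esups u @ \oo --> l.
  by rewrite -sup_l limn_esup_lim; exact: is_cvg_esups.
apply: (squeeze_cvge _ einfs_l esups_l); apply: nearW => n; apply/andP; split.
  by apply: ereal_inf_lbound; exists n => /=.
by apply: ereal_sup_ubound; exists n => /=.
Qed.

End LimnEinfEsup.

Section ScaledLimits.
Variable R : realType.
Variables (f : nat -> R -> R) (s : nat -> R) (fs : nat -> \bar R).
Hypothesis f_ge0 : forall n x, 0 <= x -> 0 <= f n x.
Hypothesis f_nd : forall n x y, 0 <= x -> x <= y -> f n x <= f n y.
Hypothesis s_ge0 : forall k, 0 <= s k.
Hypothesis s_incr : forall k, s k < s k.+1.
Hypothesis s_oo : s @ \oo --> +oo.
Hypothesis f_sk : forall k, (fun n => (f n (s k))%:E) @ \oo --> fs k.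

Local Open Scope ereal_scope.

Let s_nd : {homo s : i j / (i <= j)%N >-> (i <= j)%R}.
Proof.
by apply: (homo_leq (r := <=%R)) => // [|k]; [exact: le_trans|exact: ltW].
Qed.

Lemma fs_ge0 k : 0 <= fs k.
Proof.
apply: (lee_cvg_to (cvg_cst 0) (f_sk k)).
by apply: nearW => n; rewrite lee_fin f_ge0.
Qed.

Lemma fs_nd : nondecreasing_seq fs.
Proof.
move=> i j ij; apply: (lee_cvg_to (f_sk i) (f_sk j)).
by apply: nearW => n; rewrite lee_fin f_nd ?s_nd.
Qed.

Lemma limn_fsE : limn fs = ereal_sup (range fs).
Proof. exact: cvg_lim (ereal_nondecreasing_cvgn fs_nd). Qed.

Lemma fs_le_limn k : fs k <= limn fs.
Proof. by rewrite limn_fsE; apply: ereal_sup_ubound; exists k. Qed.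

Lemma limn_fs_le_einf (t : nat -> R) : t @ \oo --> +oo%R ->
  limn fs <= limn_einf (fun n => (f n (t n))%:E).
Proof.
move=> t_oo; rewrite limn_fsE; apply: ge_ereal_sup => _ [k _ <-].
rewrite -(cvg_limn_einf_sup (f_sk k)).1; apply: le_limn_einf.
apply: filterS ((cvgryPge t).1 t_oo (s k)) => n sk_le.
by rewrite lee_fin f_nd.
Qed.

Lemma cvg_below_scale (ts t : nat -> R) :
  (fun n => (f n (ts n))%:E) @ \oo --> limn fs ->
  (forall n, (0 <= t n <= ts n)%R) -> t @ \oo --> +oo%R ->
  (fun n => (f n (t n))%:E) @ \oo --> limn fs.
Proof.
move=> f_ts t_le t_oo; apply: limn_einf_esup_cvg; first exact: limn_fs_le_einf.
rewrite -(cvg_limn_einf_sup f_ts).2; apply: le_limn_esup; apply: nearW => n.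
by have /andP[t_ge0 t_le_ts] := t_le n; rewrite lee_fin f_nd.
Qed.

Lemma f_sk_near_le k :
  \forall n \near \oo, (f n (s k))%:E <= fs k + (k.+1%:R^-1)%:E.
Proof.
move: (fs_ge0 k) (f_sk k).
case: (fs k) => [r _ /fine_cvgP[_ /cvgrPdist_lt f_r]| |//]; last first.
  by move=> _ _; apply: nearW => n; rewrite leey.
have /f_r : (0 < k.+1%:R^-1 :> R)%R by rewrite invr_gt0 ltr0n.
apply: filterS => n; rewrite /= distrC => /ltW.
by rewrite ler_distl -EFinD lee_fin => /andP[].
Qed.

Lemma exists_optimal_scale : exists ts : nat -> R,
  [/\ forall n, (0 <= ts n)%R, nondecreasing_seq ts, ts @ \oo --> +oo%R &
      (fun n => (f n (ts n))%:E) @ \oo --> limn fs].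
Proof.
have /choice[N f_le] : forall k, exists Nk, forall n, (Nk <= n)%N ->
    (f n (s k))%:E <= fs k + (k.+1%:R^-1)%:E.
  by move=> k; have [Nk _ f_le] := f_sk_near_le k; exists Nk.
pose k := diag_index N.
have f_ts_le n : (N 0 <= n)%N ->
    (f n (s (k n)))%:E <= fs (k n) + (k n).+1%:R^-1%:E.
  by move=> /(diag_index_le N); exact: f_le.
have sk_oo : s \o k @ \oo --> +oo%R.
  apply/cvgryPge => A; have [K _ le_sK] := (cvgryPge s).1 s_oo A.
  by apply: filterS (diag_index_unbounded N K) => n /le_sK.
exists (s \o k); split => //.
- by move=> n; exact: s_ge0.
- by move=> m n mn; apply/s_nd/diag_index_nd.
apply: limn_einf_esup_cvg; first exact: limn_fs_le_einf.
have : 0 <= limn fs := le_trans (fs_ge0 0%N) (fs_le_limn 0%N).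
move: fs_le_limn; case: (limn fs) => [r fs_le _| _ _ |//]; last by rewrite leey.
apply/lee_addgt0Pr => _ /posnumP[e]; apply: limn_esup_le_near.
have [K _ inv_lt] := near_infty_natSinv_lt e.
near=> n; apply: le_trans (f_ts_le n _) _; first by near: n; exists (N 0%N).
apply: leeD; first exact: fs_le.
rewrite lee_fin ltW //; apply: (inv_lt (k n)) => /=.
by near: n; exact: diag_index_unbounded.
Unshelve. all: by end_near.
Qed.

End ScaledLimits.

Theorem lemma2p2 (R : realType) (f : nat -> R -> R) (s : nat -> R)
  (fs : nat -> \bar R)
  (f_ge0 : forall n x, 0 <= x -> 0 <= f n x)
  (f_nd : forall n x y, 0 <= x -> x <= y -> f n x <= f n y)
  (s_ge0 : forall k, 0 <= s k)
  (s_incr : forall k, s k < s k.+1)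
  (s_oo : s @ \oo --> +oo)
  (f_sk : forall k, (fun n => (f n (s k))%:E) @ \oo --> fs k) :
  let l := limn fs in
  [/\ (forall t : nat -> R, (forall n, 0 <= t n) -> t @ \oo --> +oo ->
         (l <= limn_einf (fun n => (f n (t n))%:E))%E),
      (exists ts : nat -> R, [/\ (forall n, 0 <= ts n), nondecreasing_seq ts,
         ts @ \oo --> +oo & (fun n => (f n (ts n))%:E) @ \oo --> l]) &
      (forall ts : nat -> R,
         (forall n, 0 <= ts n) -> nondecreasing_seq ts -> ts @ \oo --> +oo ->
         (fun n => (f n (ts n))%:E) @ \oo --> l ->
         forall t : nat -> R, (forall n, 0 <= t n <= ts n) -> t @ \oo --> +oo ->
         (fun n => (f n (t n))%:E) @ \oo --> l)].
Proof.
move=> l; split.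
- by move=> t _; exact: limn_fs_le_einf.
- exact: exists_optimal_scale.
- by move=> ts _ _ _ f_ts t; exact: cvg_below_scale.
Qed.
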